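(* In the dense network described in the context, for every arbitrarily small constant $\epsilon_1>0$, with high probability the minimum distance between any two nodes, and between any node and any antenna on a base-station boundary, is larger than $1/n^{1+\epsilon_1}$.
   Context: Dense network: a square of area $1$ partitioned into $m=n^{\beta}$ equal square cells ($\beta\in[0,1)$), each with a base station (BS) at its center occupying a disk of radius $\epsilon_0/\sqrt{m}$ ($\epsilon_0>0$ an arbitrarily small constant independent of $n$). Each BS has $l=n^{\gamma}$ antennas ($\gamma\in[0,1)$, $\beta+\gamma\le 1$, so $ml=O(n)$); antennas on the BS boundary are regularly spaced on the boundary circle (all $l$ of them if $l=O(\sqrt{n/m})$, otherwise $\sqrt{n/m}$ of them with the rest inside). $n$ nodes are placed independently and uniformly at random in the square minus the BS disks. ''With high probability'' means with probability tending to $1$ as $n\to\infty$. *)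

From HB Require Import structures.
From mathcomp Require Import all_boot all_order all_algebra.
From mathcomp Require Import all_classical all_reals all_analysis.
Set Implicit Arguments. Unset Strict Implicit. Unset Printing Implicit Defensive.
Import Order.TTheory GRing.Theory Num.Theory.
Import numFieldNormedType.Exports.
Local Open Scope classical_set_scope.
Local Open Scope ring_scope.

Definition dist2 {R : realType} (p q : R * R) : R :=
  Num.sqrt ((p.1 - q.1) ^+ 2 + (p.2 - q.2) ^+ 2).

(** Number of cells per side: k = floor (n^(beta/2)) (at least 1), so that
    the number of cells is m = k^2 (~ n^beta). *)
Definition cells_side {R : realType} (beta : R) (n : nat) : nat :=
  maxn 1 (Num.trunc ((n%:R : R) `^ (beta / 2))).

Definition n_ant {R : realType} (gamma : R) (n : nat) : nat :=
  Num.trunc ((n%:R : R) `^ gamma).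

(** Number of antennas on the boundary circle of one BS:
    all l of them if l = O(sqrt(n/m)) (i.e. gamma <= (1-beta)/2),
    otherwise floor(sqrt(n/m)). *)
Definition n_bdry {R : realType} (beta gamma : R) (n : nat) : nat :=
  if gamma <= (1 - beta) / 2 then n_ant gamma n
  else Num.trunc (Num.sqrt ((n%:R : R) / ((cells_side beta n)%:R ^+ 2))).

Definition bs_center {R : realType} (k a b : nat) : R * R :=
  (((a%:R + 2^-1) / k%:R), ((b%:R + 2^-1) / k%:R)).

(** Radius of the BS disk: eps0 / sqrt m = eps0 / k. *)
Definition bs_radius {R : realType} (eps0 : R) (k : nat) : R := eps0 / k%:R.

Definition node_region {R : realType} (beta eps0 : R) (n : nat) : set (R * R) :=
  let k := cells_side beta n in
  [set p | 0 <= p.1 <= 1 /\ 0 <= p.2 <= 1 /\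
     forall a b : nat, (a < k)%N -> (b < k)%N ->
       bs_radius eps0 k < dist2 p (bs_center k a b)].

Definition bdry_antenna {R : realType} (beta eps0 theta : R) (n a b j : nat)
  (gamma : R) : R * R :=
  let k := cells_side beta n in
  let c := bs_center k a b in
  let phi := theta + 2 * pi * j%:R / (n_bdry beta gamma n)%:R in
  (c.1 + bs_radius eps0 k * cos phi, c.2 + bs_radius eps0 k * sin phi).

Definition leb2 {R : realType} := ((@lebesgue_measure R) \x (@lebesgue_measure R))%E.

Definition uniform_on {d : measure_display} {T : measurableType d} {R : realType}
  (P : probability T R) (X : T -> R * R) (D : set (R * R)) : Prop :=
  forall A : set (R * R), measurable A ->
    P (X @^-1` A) = ((fine (leb2 (A `&` D)) / fine (leb2 D)))%:E.

Definition mutually_independent {d : measure_display} {T : measurableType d}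
  {R : realType} (n : nat) (P : probability T R) (X : 'I_n -> T -> R * R) : Prop :=
  forall (S : {set 'I_n}) (A : 'I_n -> set (R * R)),
    (forall i, measurable (A i)) ->
    fine (P [set w | forall i, i \in S -> A i (X i w)]) =
    \prod_(i in S) fine (P (X i @^-1` A i)).

From HB Require Import structures.
From mathcomp Require Import all_boot all_order all_algebra.
From mathcomp Require Import all_classical all_reals all_analysis.
From mathcomp Require Import ring lra.
Import Order.TTheory GRing.Theory Num.Theory.
Import numFieldNormedType.Exports.
Local Open Scope classical_set_scope.
Local Open Scope ring_scope.

(* The node region has area at least [c = 1 - 4 eps0^2], so a uniform node falls
   into a set of area [A] with probability at most [A / c].  Hence a node lies
   within [r] of a fixed antenna with probability at most [(2 r)^2 / c], and two
   independent nodes lie within [r] of each other with probability at most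
   [36 r^2 / c^2]: split according to the cell of a grid of mesh [r] containing the
   first one.  There are at most [n^2] pairs of nodes and, as [k^2 n_bdry <= n],
   at most [n^2] node-antenna pairs, so by the union bound the configuration fails
   to be [r]-separated with probability [O((n r)^2) = O(n^(-2 eps1))] for
   [r = n^-(1 + eps1)]. *)

Section measure_union_bound.
Context {d} {T : ringOfSetsType d} {R : realType} (mu : {content set T -> \bar R}).

Lemma measure_big_setU_le {I : Type} (s : seq I) (F : I -> set T) :
  (forall i, measurable (F i)) ->
  (mu (\big[setU/set0]_(i <- s) F i) <= \sum_(i <- s) mu (F i))%E.
Proof.
move=> mF; elim: s => [|i s IHs]; first by rewrite !big_nil measure0.
rewrite !big_cons; apply: le_trans (leeD2l _ IHs).
by apply: measureU2 => //; exact: bigsetU_measurable.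
Qed.

Lemma measure_bigcup_fin_le {I : finType} {F : I -> set T} {b : R} :
  (forall i, measurable (F i)) -> (forall i, (mu (F i) <= b%:E)%E) ->
  (mu (\bigcup_i F i) <= (#|I|%:R * b)%:E)%E.
Proof.
move=> mF Fb; rewrite (_ : [set: I] = [set` enum I]); last first.
  by apply/seteqP; split=> i //= _; rewrite mem_enum.
rewrite bigcup_seq cardE -sum1_size natr_sum mulr_suml -sumEFin.
apply: le_trans (measure_big_setU_le (enum I) F mF) _.
by apply: lee_sum => i _; rewrite mul1r.
Qed.

End measure_union_bound.

Section squares.
Context {R : realType}.
Implicit Types (x y s r : R) (p q : R * R).

Definition square x y s : set (R * R) := `[x, x + s] `*` `[y, y + s].

Lemma measurable_square x y s : measurable (square x y s).
Proof. by apply: measurableX; exact: measurable_itv. Qed.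

Lemma leb2_square x y s : 0 <= s -> leb2 (square x y s) = (s * s)%:E.
Proof.
move=> s0; rewrite /leb2 product_measure1E ?lebesgue_measure_itv//=.
rewrite (lebesgue_measure_itv `[x, x + s]) (lebesgue_measure_itv `[y, y + s]) /=.
rewrite !lte_fin; have [->|s_neq0] := eqVneq s 0; first by rewrite addr0 ltxx mul0e mulr0.
have s_gt0 : 0 < s by rewrite lt0r s_neq0.
by rewrite !ltrDl s_gt0 -EFinM !(addrC x) !(addrC y) !addrK.
Qed.

Lemma leb2_square_le x y s : 0 <= s -> (leb2 (square x y s) <= (s * s)%:E)%E.
Proof. by move=> s0; rewrite leb2_square. Qed.

Lemma dist2_ge_norm1 p q : `|p.1 - q.1| <= dist2 p q.
Proof. by rewrite /dist2 -sqrtr_sqr ler_sqrt ?addr_ge0 ?sqr_ge0 // lerDl sqr_ge0. Qed.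

Lemma dist2_ge_norm2 p q : `|p.2 - q.2| <= dist2 p q.
Proof. by rewrite /dist2 -sqrtr_sqr ler_sqrt ?addr_ge0 ?sqr_ge0 // lerDr sqr_ge0. Qed.

Lemma dist2_le_square p q r :
  dist2 p q <= r -> square (q.1 - r) (q.2 - r) (r + r) p.
Proof.
move=> pq_r; have := le_trans (dist2_ge_norm1 p q) pq_r.
have := le_trans (dist2_ge_norm2 p q) pq_r.
rewrite !ler_norml /square /= !in_itv /= => /andP[? ?] /andP[? ?].
by split; apply/andP; split; lra.
Qed.

Lemma dist2_le p q r : 0 <= r ->
  (dist2 p q <= r) = ((p.1 - q.1) ^+ 2 + (p.2 - q.2) ^+ 2 <= r ^+ 2).
Proof. by move=> r0; rewrite /dist2 -{1}(ger0_norm r0) -sqrtr_sqr ler_sqrt // sqr_ge0. Qed.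

Lemma measurable_dist2_le {d} {Om : measurableType d} {f g : Om -> R * R} {r : R} :
  measurable_fun setT f -> measurable_fun setT g -> 0 <= r ->
  measurable [set w | dist2 (f w) (g w) <= r].
Proof.
move=> mf mg r0.
have mcoord (h : R * R -> R) : measurable_fun setT h ->
    measurable_fun setT (fun w => (h (f w) - h (g w)) ^+ 2).
  move=> mh; apply/measurable_realfun.measurable_funX/measurable_realfun.measurable_funB;
  exact: measurableT_comp.
have mh := measurable_realfun.measurable_funD
  (mcoord _ (@measurable_fst _ _ _ _)) (mcoord _ (@measurable_snd _ _ _ _)).
have -> : [set w | dist2 (f w) (g w) <= r] =
    (fun w => ((f w).1 - (g w).1) ^+ 2 + ((f w).2 - (g w).2) ^+ 2) @^-1` `]-oo, r ^+ 2].
  by apply/seteqP; split => w; rewrite /= in_itv /= dist2_le.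
by rewrite -[X in measurable X]setTI; apply: mh => //; exact: measurable_itv.
Qed.

Lemma leb2_sub_unit_square_fin (A : set (R * R)) :
  measurable A -> A `<=` square 0 0 1 -> leb2 A \is a fin_num.
Proof.
move=> mA A01; rewrite ge0_fin_numE ?measure_ge0 //.
apply: le_lt_trans (ltry 1); have := leb2_square 0 0 1 ler01; rewrite mulr1 => <-.
by apply: le_measure => //; rewrite inE //; exact: measurable_square.
Qed.

Lemma grid_cell r x : 0 < r -> 0 <= x <= 1 ->
  exists2 u : 'I_(Num.truncn r^-1).+1, u%:R * r <= x & x <= u%:R * r + r.
Proof.
move=> r_gt0 /andP[x_ge0 x_le1]; have xr_ge0 : 0 <= x / r by rewrite divr_ge0 // ltW.
have u_lt : (Num.truncn (x / r) < (Num.truncn r^-1).+1)%N.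
  by rewrite ltnS le_truncn // ler_pdivrMr // mulVf ?gt_eqF.
exists (Ordinal u_lt) => /=; have /andP[lo hi] := truncn_itv xr_ge0.
- by rewrite -ler_pdivlMr.
- by move: hi; rewrite ltr_pdivrMr // -natr1 mulrDl mul1r => /ltW.
Qed.

Lemma grid_square_pair r p q : 0 < r -> square 0 0 1 p -> dist2 p q <= r ->
  exists u v : 'I_(Num.truncn r^-1).+1,
    square (u%:R * r) (v%:R * r) r p /\ square (u%:R * r - r) (v%:R * r - r) (r + r + r) q.
Proof.
move=> r_gt0; rewrite /square /= !in_itv /= !add0r => -[p1 p2] pq_r.
have := le_trans (dist2_ge_norm1 p q) pq_r; have := le_trans (dist2_ge_norm2 p q) pq_r.
rewrite !ler_norml => /andP[? ?] /andP[? ?].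
have [u ? ?] := grid_cell _ _ r_gt0 p1; have [v ? ?] := grid_cell _ _ r_gt0 p2.
by exists u, v; rewrite /= !in_itv /=; split; split; apply/andP; split; lra.
Qed.

End squares.

Section node_region.
Context {R : realType} (beta eps0 : R) (n : nat).
Hypothesis eps0_ge0 : 0 <= eps0.

Let k := cells_side beta n.
Let rho := bs_radius eps0 k.
Let center (ab : 'I_k * 'I_k) : R * R := bs_center k ab.1 ab.2.

Lemma cells_side_gt0 : (0 < k)%N.
Proof. by rewrite /k /cells_side leq_max. Qed.

Lemma node_region_sub_unit_square : node_region beta eps0 n `<=` square 0 0 1.
Proof. by move=> p [p1 [p2 _]]; rewrite /square /= !in_itv /= !add0r p1 p2. Qed.

Lemma measurable_node_region : measurable (node_region beta eps0 n).
Proof.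
have -> : node_region beta eps0 n = square 0 0 1 `&`
    \bigcap_(a in `I_k) \bigcap_(b in `I_k) ~` [set p | dist2 p (bs_center k a b) <= rho].
  apply/seteqP; split => p.
    move=> pD; split; first exact: node_region_sub_unit_square.
    by case: pD => _ [_ pfar] a /= ak b /= bk; apply/negP; rewrite -ltNge; apply: pfar.
  rewrite /square /= !in_itv /= !add0r => -[[p1 p2] pfar]; split => //; split => // a b ak bk.
  by rewrite ltNge; apply/negP; exact: pfar.
apply: measurableI; first exact: measurable_square.
apply: fin_bigcap_measurable => [|a _]; first exact: finite_II.
apply: fin_bigcap_measurable => [|b _]; first exact: finite_II.
apply: measurableC.
apply: (@measurable_dist2_le R _ _ id (cst (bs_center k a b))) => //.
by rewrite divr_ge0.
Qed.

(* The base-station disks are covered by [k^2] squares of side [2 rho = 2 eps0 / k]. *)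
Lemma node_region_area : 1 - 4 * eps0 ^+ 2 <= fine (leb2 (node_region beta eps0 n)).
Proof.
set D := node_region beta eps0 n.
have rho_ge0 : 0 <= rho by rewrite divr_ge0.
pose U := \bigcup_(ab : 'I_k * 'I_k)
  square ((center ab).1 - rho) ((center ab).2 - rho) (rho + rho).
have mU : measurable U.
  by apply: fin_bigcup_measurable => [|ab _]; [exact: finite_finset|exact: measurable_square].
have leb2U : (leb2 U <= (4 * eps0 ^+ 2)%:E)%E.
  have k_neq0 : (k%:R : R) != 0 by rewrite pnatr_eq0 -lt0n cells_side_gt0.
  have -> : 4 * eps0 ^+ 2 = #|{: 'I_k * 'I_k}|%:R * ((rho + rho) * (rho + rho)).
    by rewrite card_prod card_ord natrM /rho /bs_radius; field.
  apply: measure_bigcup_fin_le => [ab|ab]; first exact: measurable_square.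
  by apply: leb2_square_le; rewrite addr_ge0.
have cover : square 0 0 1 `<=` D `|` U.
  move=> p p01; have [pD|pD] := pselect (D p); [by left|right].
  have : ~ (forall a b, (a < k)%N -> (b < k)%N -> rho < dist2 p (bs_center k a b)).
    by move: p01; rewrite /square /= !in_itv /= !add0r => -[p1 p2] pfar; apply: pD.
  move=> /existsNP[a /existsNP[b /not_implyP[ak /not_implyP[bk /negP]]]].
  by rewrite -leNgt => near_ab; exists (Ordinal ak, Ordinal bk) => //; exact: dist2_le_square.
have D_fin := leb2_sub_unit_square_fin _ measurable_node_region node_region_sub_unit_square.
rewrite lerBlDr -lee_fin EFinD fineK //.
apply: le_trans _ (leeD2l _ leb2U).
apply: le_trans _ (measureU2 leb2 measurable_node_region mU).
have := leb2_square (0 : R) 0 1 ler01; rewrite mulr1 => <-.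
apply: (le_measure leb2 _ _ cover); rewrite inE; first exact: measurable_square.
exact: measurableU measurable_node_region mU.
Qed.

End node_region.

Section random_points.
Context {R : realType} {d : measure_display} {Om : measurableType d}.
Context (P : probability Om R) {n : nat} (X : 'I_n -> Om -> R * R).
Variables (D : set (R * R)) (c : R).
Hypotheses (mX : forall i, measurable_fun setT (X i))
  (X_indep : mutually_independent P X) (X_unif : forall i, uniform_on P (X i) D)
  (mD : measurable D) (D01 : D `<=` square 0 0 1)
  (c_gt0 : 0 < c) (c_le_area : c <= fine (leb2 D)).

Lemma measurable_preimage i (A : set (R * R)) : measurable A -> measurable (X i @^-1` A).
Proof. by move=> mA; rewrite -[X in measurable X]setTI; exact: mX. Qed.

Lemma prob_preimage_le i (A : set (R * R)) s : measurable A -> (leb2 A <= s%:E)%E ->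
  (P (X i @^-1` A) <= (s / c)%:E)%E.
Proof.
move=> mA As; rewrite X_unif // lee_fin.
have ADs : (leb2 (A `&` D) <= s%:E)%E.
  by apply: le_trans As; apply: le_measure; rewrite ?inE //; exact: measurableI.
have AD_ge0 := measure_ge0 leb2 (A `&` D).
have AD_fin : leb2 (A `&` D) \is a fin_num.
  by rewrite ge0_fin_numE // (le_lt_trans ADs) ?ltry.
have [fAD_le fAD_ge0] : fine (leb2 (A `&` D)) <= s /\ 0 <= fine (leb2 (A `&` D)).
  by rewrite -!lee_fin fineK.
apply: ler_pM => //; first by rewrite invr_ge0 (le_trans (ltW c_gt0)).
by rewrite lef_pV2 ?posrE // (lt_le_trans c_gt0).
Qed.

Lemma prob_outside_unit_square i : P (X i @^-1` ~` square 0 0 1) = 0%E.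
Proof.
rewrite X_unif; last by apply: measurableC; exact: measurable_square.
have -> : ~` square 0 0 1 `&` D = set0.
  by apply/seteqP; split => p // [p_out pD]; apply/p_out/D01.
by rewrite [leb2 set0]measure0 mul0r.
Qed.

Lemma prob_preimageI i j (A B : set (R * R)) : i != j -> measurable A -> measurable B ->
  P (X i @^-1` A `&` X j @^-1` B) = (P (X i @^-1` A) * P (X j @^-1` B))%E.
Proof.
move=> ij mA mB; have ji : (j == i) = false by rewrite eq_sym (negbTE ij).
pose F (l : 'I_n) := if l == i then A else if l == j then B else setT.
have mF l : measurable (F l) by rewrite /F; case: ifP => // _; case: ifP.
have := X_indep [set i; j]%SET F mF.
have -> : [set w | forall l, l \in [set i; j]%SET -> F l (X l w)] =
    X i @^-1` A `&` X j @^-1` B.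
  apply/seteqP; split => w /=.
    by move=> Fw; split; [move: (Fw i); rewrite /F eqxx | move: (Fw j); rewrite /F ji eqxx];
      apply; rewrite !inE eqxx ?orbT.
  by move=> [Aw Bw] l; rewrite !inE /F => /orP[] /eqP ->; rewrite ?eqxx ?ji.
rewrite big_setU1 ?inE //= big_set1 /F eqxx ji eqxx => PAB.
have fin (E : set Om) : measurable E -> (fine (P E))%:E = P E.
  by move=> mE; rewrite fineK // fin_num_measure.
have mAB : measurable (X i @^-1` A `&` X j @^-1` B).
  by apply: measurableI; exact: measurable_preimage.
by rewrite -(fin _ mAB) PAB EFinM !fin //; exact: measurable_preimage.
Qed.

Lemma prob_near_point i z r : 0 <= r ->
  (P [set w | dist2 (X i w) z <= r]%R <= ((r + r) * (r + r) / c)%:E)%E.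
Proof.
move=> r_ge0; have rr_ge0 : 0 <= r + r by rewrite addr_ge0.
have mS := measurable_square (z.1 - r) (z.2 - r) (r + r).
apply: le_trans _ (prob_preimage_le i _ _ mS (leb2_square_le _ _ _ rr_ge0)).
apply: le_measure; rewrite ?inE; last by move=> w; exact: dist2_le_square.
- exact: (measurable_dist2_le (mX i) (measurable_cst z) r_ge0).
- exact: measurable_preimage.
Qed.

Lemma prob_near_pair i j r : i != j -> 0 < r -> r <= 1 ->
  (P [set w | dist2 (X i w) (X j w) <= r]%R <= (36 * (r * r) / (c * c))%:E)%E.
Proof.
move=> ij r_gt0 r_le1; have r_ge0 := ltW r_gt0.
set M := (Num.truncn r^-1).+1.
pose G (uv : 'I_M * 'I_M) := X i @^-1` square (uv.1%:R * r) (uv.2%:R * r) r `&`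
  X j @^-1` square (uv.1%:R * r - r) (uv.2%:R * r - r) (r + r + r).
have mG uv : measurable (G uv).
  by apply: measurableI; apply: measurable_preimage; exact: measurable_square.
have PG uv : (P (G uv) <= (r * r / c * ((r + r + r) * (r + r + r) / c))%:E)%E.
  rewrite prob_preimageI // ?EFinM; try exact: measurable_square.
  apply: lee_pmul; try exact: measure_ge0.
    by apply: prob_preimage_le; [exact: measurable_square|exact: leb2_square_le].
  by apply: prob_preimage_le; [exact: measurable_square|apply: leb2_square_le; lra].
have mU : measurable (\bigcup_uv G uv).
  by apply: fin_bigcup_measurable => // uv _; exact: finite_finset.
pose Out := X i @^-1` ~` square 0 0 1.
have mOut : measurable Out.
  by apply: measurable_preimage; apply: measurableC; exact: measurable_square.
have POut : P Out = 0%E := prob_outside_unit_square i.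
have cover : [set w | dist2 (X i w) (X j w) <= r] `<=` Out `|` \bigcup_uv G uv.
  move=> w /= near; have [w01|] := pselect (square 0 0 1 (X i w)); [right|by left].
  by have [u [v]] := grid_square_pair _ _ _ r_gt0 w01 near; exists (u, v).
have Mr_le2 : M%:R * r <= 2.
  have tr_le : (Num.truncn r^-1)%:R * r <= 1.
    by rewrite -[leRHS](mulVf (lt0r_neq0 r_gt0)) ler_pM2r // truncn_le invr_ge0.
  by rewrite /M -natr1 mulrDl mul1r; lra.
apply: le_trans (le_measure P _ _ cover) _; rewrite ?inE //.
- exact: measurable_dist2_le.
- exact: measurableU.
apply: le_trans (measureU2 P mOut mU) _.
have -> : (P Out + P (\bigcup_uv G uv) = P (\bigcup_uv G uv))%E by rewrite POut add0e.
apply: le_trans (measure_bigcup_fin_le P mG PG) _.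
rewrite lee_fin card_prod card_ord.
have -> : (M * M)%:R * (r * r / c * ((r + r + r) * (r + r + r) / c)) =
    9 * ((M%:R * r) * (M%:R * r)) * (r * r / (c * c)).
  by rewrite natrM; field; rewrite gt_eqF.
rewrite -[X in _ <= X]mulrA; apply: ler_wpM2r; first by rewrite divr_ge0 ?mulr_ge0 // ltW.
have Mr_ge0 : 0 <= M%:R * r by rewrite mulr_ge0.
nra.
Qed.

Definition well_separated (r : R) {J : finType} (z : J -> R * R) : set Om :=
  [set w | (forall i j : 'I_n, i != j -> r < dist2 (X i w) (X j w)) /\
           (forall i q, r < dist2 (X i w) (z q))].

Section well_separated.
Variables (r : R) (J : finType) (z : J -> R * R).

Let near_pair (ij : 'I_n * 'I_n) : set Om :=
  if ij.1 != ij.2 then [set w | dist2 (X ij.1 w) (X ij.2 w) <= r] else set0.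
Let near_point (iq : 'I_n * J) : set Om := [set w | dist2 (X iq.1 w) (z iq.2) <= r].

Lemma setC_well_separated :
  ~` well_separated r z = \bigcup_ij near_pair ij `|` \bigcup_iq near_point iq.
Proof.
apply/seteqP; split => w /=.
  move=> not_sep; apply: contrapT => /not_orP[far_pairs far_points]; apply: not_sep; split.
    move=> i j ij; rewrite ltNge; apply/negP => near_ij; apply: far_pairs.
    by exists (i, j) => //; rewrite /near_pair /= ij.
  move=> i q; rewrite ltNge; apply/negP => near_iq; apply: far_points.
  by exists (i, q).
move=> [[[i j] _]|[[i q] _]]; rewrite /near_pair /=.
  by case: ifP => // ij near_ij [far_pairs _]; move: (far_pairs i j ij); rewrite ltNge near_ij.
by move=> near_iq [_ far_points]; move: (far_points i q); rewrite ltNge near_iq.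
Qed.

Hypothesis r_gt0 : 0 < r.
Let r_ge0 : 0 <= r := ltW r_gt0.

Let measurable_near_pair ij : measurable (near_pair ij).
Proof. by rewrite /near_pair; case: ifP => // _; exact: measurable_dist2_le. Qed.

Let measurable_near_point iq : measurable (near_point iq).
Proof. exact: (measurable_dist2_le (mX _) (measurable_cst _)). Qed.

Lemma measurable_well_separated : measurable (well_separated r z).
Proof.
rewrite -[well_separated r z]setCK setC_well_separated; apply: measurableC.
by apply: measurableU; apply: fin_bigcup_measurable => // *; exact: finite_finset.
Qed.

Lemma prob_not_well_separated_le : r <= 1 -> (#|J| <= n)%N ->
  (P (~` well_separated r z) <= ((n%:R * r) ^+ 2 * (36 / (c * c) + 4 / c))%:E)%E.
Proof.
move=> r_le1 Jn.
have Ppair ij : (P (near_pair ij) <= (36 * (r * r) / (c * c))%:E)%E.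
  rewrite /near_pair; case: ifP => [ij_neq|_]; first exact: prob_near_pair.
  have -> : P set0 = 0%E := measure0 P.
  by rewrite lee_fin !mulr_ge0 ?invr_ge0 ?mulr_ge0 // ltW.
have Ppoint iq : (P (near_point iq) <= ((r + r) * (r + r) / c)%:E)%E.
  exact: prob_near_point.
rewrite setC_well_separated.
apply: le_trans (measureU2 P _ _) _; try
  by apply: fin_bigcup_measurable => // *; exact: finite_finset.
apply: le_trans (leeD (measure_bigcup_fin_le P measurable_near_pair Ppair)
                      (measure_bigcup_fin_le P measurable_near_point Ppoint)) _.
rewrite -EFinD lee_fin !card_prod !card_ord.
have nJ : (n * #|J|)%:R <= (n * n)%:R :> R by rewrite ler_nat leq_mul2l Jn orbT.
have -> : (n%:R * r) ^+ 2 * (36 / (c * c) + 4 / c) =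
    (n * n)%:R * (36 * (r * r) / (c * c)) + (n * n)%:R * ((r + r) * (r + r) / c).
  by rewrite natrM; field; rewrite gt_eqF.
by rewrite lerD2l ler_wpM2r // divr_ge0 ?mulr_ge0 ?addr_ge0 // ltW.
Qed.

Lemma prob_well_separated_bounds : r <= 1 -> (#|J| <= n)%N ->
  1 - (n%:R * r) ^+ 2 * (36 / (c * c) + 4 / c) <= fine (P (well_separated r z)) <= 1.
Proof.
move=> r_le1 Jn; have msep := measurable_well_separated.
have := prob_not_well_separated_le r_le1 Jn; have := probability_le1 P msep.
rewrite probability_setC // -(fineK (fin_num_measure P _ msep)) -EFinB !lee_fin.
by move=> ? ?; apply/andP; split => //; lra.
Qed.

End well_separated.

End random_points.

Lemma cvg_natr_powRN {R : realType} (a : R) : 0 < a ->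
  (fun n : nat => n%:R `^ (- a)) @ \oo --> (0 : R).
Proof.
move=> a_gt0; apply/cvgrPdist_le => e e_gt0.
exists (Num.truncn (e^-1 `^ a^-1)).+1 => // m /= m_big.
have m_gt0 : (0 : R) < m%:R by rewrite ltr0n (leq_trans _ m_big).
rewrite sub0r normrN ger0_norm ?powR_ge0 // powRN -[leRHS]invrK.
rewrite lef_pV2 ?posrE ?invr_gt0 ?powR_gt0 //.
have -> : e^-1 = (e^-1 `^ a^-1) `^ a.
  by rewrite -powRrM mulVf ?lt0r_neq0 // powRr1 // invr_ge0 ltW.
apply: (ge0_ler_powR (ltW a_gt0)); rewrite ?nnegrE ?powR_ge0 //.
by apply: le_trans (ltW (truncnS_gt _)) _; rewrite ler_nat.
Qed.

Lemma cvg_one_sub_sqr {R : realType} (K : R) {x : nat -> R} : x @ \oo --> 0 ->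
  (fun n => 1 - x n ^+ 2 * K) @ \oo --> (1 : R).
Proof.
move=> x0; have h := cvgB (cvg_cst (1 : R)) (cvgM (cvgM x0 x0) (cvg_cst K)).
by rewrite !mul0r subr0 in h; apply: h.
Qed.

Section inv_natr_powR.
Context {R : realType} (e : R) {n : nat}.
Hypothesis n_gt0 : (0 < n)%N.

Let N_gt0 : (0 : R) < n%:R. Proof. by rewrite ltr0n. Qed.

Lemma natr_mul_inv_powR1D : n%:R * (1 / n%:R `^ (1 + e)) = n%:R `^ (- e).
Proof.
rewrite powRD; last by rewrite lt0r_neq0 ?implybT.
by rewrite powRr1 ?ler0n // powRN; field; rewrite ?lt0r_neq0 ?powR_gt0.
Qed.

Lemma inv_natr_powR1D_itv : 0 <= e -> 0 < 1 / n%:R `^ (1 + e) /\ 1 / n%:R `^ (1 + e) <= 1.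
Proof.
move=> e_ge0; split; first by rewrite divr_gt0 ?powR_gt0.
rewrite ler_pdivrMr ?powR_gt0 // mul1r -[leLHS](powRr0 n%:R).
by apply: ler_powR; rewrite ?ler1n // addr_ge0.
Qed.

End inv_natr_powR.

Section counting.
Context {R : realType} (beta gamma : R) (n : nat).
Hypotheses (beta_ge0 : 0 <= beta) (n_gt0 : (0 < n)%N).

Let N : R := n%:R.
Let k := cells_side beta n.

Let N_ge1 : 1 <= N. Proof. by rewrite ler1n. Qed.

Let powR_ge1 x : 0 <= x -> 1 <= N `^ x.
Proof. by move=> x_ge0; have := ler_powR N_ge1 x_ge0; rewrite powRr0. Qed.

Lemma cells_side_sqr_le : k%:R * k%:R <= N `^ beta.
Proof.
have k_le : k%:R <= N `^ (beta / 2).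
  rewrite /k /cells_side (maxn_idPr _) ?truncn_le ?powR_ge0 //.
  by rewrite truncn_ge_nat ?powR_ge0 // powR_ge1 // divr_ge0.
have -> : N `^ beta = N `^ (beta / 2) * N `^ (beta / 2).
  by rewrite -powRD ?lt0r_neq0 ?implybT ?(lt_le_trans ltr01 N_ge1) // -splitr.
by apply: ler_pM.
Qed.

Lemma cells_bdry_count : 0 <= gamma -> beta + gamma <= 1 ->
  (k * k * n_bdry beta gamma n <= n)%N.
Proof.
move=> gamma_ge0 bg_le1; rewrite -(ler_nat R) !natrM -/N.
have N_gt0 : 0 < N := lt_le_trans ltr01 N_ge1.
have powR_le_N x : x <= 1 -> N `^ x <= N.
  by move=> x_le1; rewrite -[leRHS](powRr1 (ltW N_gt0)); exact: ler_powR.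
have kk_le := cells_side_sqr_le.
rewrite /n_bdry; case: ifP => _.
  have nb_le : (n_ant gamma n)%:R <= N `^ gamma by rewrite truncn_le powR_ge0.
  apply: le_trans (ler_pM _ _ kk_le nb_le) _; rewrite ?mulr_ge0 //.
  by rewrite -powRD ?lt0r_neq0 ?implybT // powR_le_N.
(* Here [nb <= sqrt (N / k^2)], whence [(k^2 nb)^2 <= k^2 N <= N^2]. *)
set s := Num.sqrt (N / k%:R ^+ 2); set nb := Num.truncn s.
have k_gt0 : (0 : R) < k%:R by rewrite ltr0n cells_side_gt0.
have nb_le : nb%:R <= s by rewrite truncn_le sqrtr_ge0.
have ss : s * s * (k%:R * k%:R) = N.
  by rewrite -expr2 sqr_sqrtr ?divr_ge0 // -expr2 divfK // expf_neq0 ?lt0r_neq0.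
have kk_N : k%:R * k%:R <= N by apply: le_trans kk_le (powR_le_N _ _); lra.
set q := k%:R * k%:R in kk_N ss *.
have q_ge0 : 0 <= q by rewrite mulr_ge0.
have sq_le : (q * nb%:R) * (q * nb%:R) <= N * N.
  have nb2 : nb%:R * nb%:R <= s * s by rewrite ler_pM.
  have -> : (q * nb%:R) * (q * nb%:R) = q * (q * (nb%:R * nb%:R)) by ring.
  by rewrite -{2}ss [s * s * q]mulrC ler_pM // ?mulr_ge0 // ler_wpM2l.
have nbq_ge0 : 0 <= q * nb%:R by rewrite mulr_ge0.
nra.
Qed.

End counting.

Theorem lemma6 (R : realType) (beta gamma eps0 : R)
  (hbeta : 0 <= beta < 1) (hgamma : 0 <= gamma < 1) (hbg : beta + gamma <= 1)
  (heps0 : 0 < eps0 < 2^-1)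
  (theta : nat -> nat -> nat -> R)
  (d : measure_display) (Omega : nat -> measurableType d)
  (P : forall n, probability (Omega n) R)
  (X : forall n, 'I_n -> Omega n -> R * R)
  (hXmeas : forall n (i : 'I_n), measurable_fun setT (X n i))
  (hXind : forall n, mutually_independent (P n) (X n))
  (hXunif : forall n (i : 'I_n), uniform_on (P n) (X n i) (node_region beta eps0 n))
  (eps1 : R) (heps1 : 0 < eps1) :
  (fun n : nat => fine (P n
     [set w | (forall i j : 'I_n, i != j ->
                 1 / (n%:R `^ (1 + eps1)) < dist2 (X n i w) (X n j w)) /\
              (forall (i : 'I_n) (a b j : nat),
                 (a < cells_side beta n)%N -> (b < cells_side beta n)%N ->
                 (j < n_bdry beta gamma n)%N ->
                 1 / (n%:R `^ (1 + eps1)) <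
                   dist2 (X n i w) (bdry_antenna beta eps0 (theta n a b) n a b j gamma))]))
  @ \oo --> (1 : R).
Proof.
case/andP: hbeta => beta_ge0 _; case/andP: hgamma => gamma_ge0 _.
case/andP: heps0 => eps0_gt0 eps0_lt_half; have eps0_ge0 := ltW eps0_gt0.
set c := 1 - 4 * eps0 ^+ 2; have c_gt0 : 0 < c by rewrite /c; nra.
have lo := cvg_one_sub_sqr (36 / (c * c) + 4 / c) (cvg_natr_powRN _ heps1).
apply: (squeeze_cvgr _ lo (cvg_cst (1 : R))).
near=> n; have n_gt0 : (0 < n)%N by near: n; exists 1%N.
set k := cells_side beta n; set nb := n_bdry beta gamma n.
pose z (q : 'I_k * 'I_k * 'I_nb) :=
  bdry_antenna beta eps0 (theta n q.1.1 q.1.2) n q.1.1 q.1.2 q.2 gamma.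
set r := 1 / n%:R `^ (1 + eps1).
have [r_gt0 r_le1] := inv_natr_powR1D_itv eps1 n_gt0 (ltW heps1).
rewrite [E in P n E](_ : _ = well_separated (X n) r z); last first.
  apply/seteqP; split => w [far_pairs far_ants]; split => //.
    by move=> i [[a b] j]; exact: far_ants.
  by move=> i a b j ak bk jnb; exact: (far_ants i (Ordinal ak, Ordinal bk, Ordinal jnb)).
rewrite -natr_mul_inv_powR1D // -/r.
apply: (prob_well_separated_bounds (P n) (X n) _ c (hXmeas n) (hXind n) (hXunif n)
  (measurable_node_region _ _ _ eps0_ge0) (node_region_sub_unit_square _ _ _) c_gt0
  (node_region_area _ _ _ eps0_ge0) r _ z r_gt0 r_le1).
by rewrite !card_prod !card_ord; apply: cells_bdry_count.
Unshelve. all: by end_near.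
Qed.
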